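(* Let $\mathcal{A}$ be a category of cubes. The following conditions are equivalent: (1) $\mathcal{A}$ is shell-complete; (2) for any $p,q\geq 2$ and any map of $\mathcal A$-sets $x:\partial\mathcal{A}[p]\to\mathcal{A}[q]$, the set map $x_0:[p]\to[q]$ belongs to $\mathcal{A}$; (3) for any $p,q\geq2$, any map of $\mathcal A$-sets $x:\partial\mathcal{A}[p]\to\mathcal{A}[q]$ factors uniquely as a composite $\partial\mathcal{A}[p]\subset\mathcal{A}[p]\to\mathcal{A}[q]$.
   Context: $[0]=\{()\}$, $[n]=\{0,1\}^n$ ($n\ge1$) with the product order; ${\rm PoSet}$ is posets with strictly increasing maps. Face maps $\delta_i^\alpha:[n-1]\to[n]$ insert $\alpha\in\{0,1\}$ at position $i$; $\square$ is the subcategory of ${\rm PoSet}$ with objects $[n]$ generated by face maps. A map $[m]\to[n]$ is adjacency-preserving if strictly increasing and sends pairs at Hamming distance $1$ to pairs at Hamming distance $1$. A category of cubes is a subcategory $\mathcal A\subset{\rm PoSet}$ with objects $\{[n]:n\ge0\}$, containing $\square$, whose morphisms are adjacency-preserving. An $\mathcal A$-set is a presheaf on $\mathcal A$; $\mathcal A[p]=\mathcal A(-,[p])$; $\partial\mathcal A[p]$ is the subpresheaf of $\mathcal A[p]$ with the same $k$-cubes for $k<p$ and none in dimensions $\ge p$. For a map $x$ of $\mathcal A$-sets from $\partial\mathcal A[p]$ (or $\mathcal A[p]$) to $\mathcal A[q]$, $x_0$ is its component in dimension $0$, viewed via $\mathcal A([0],[n])\cong[n]$ as a set map $[p]\to[q]$.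 $\mathrm{cosk}_1^{\mathcal A}$ is the right adjoint of the truncation $K\mapsto K_{\le1}$ from $\mathcal A$-sets to presheaves on the full subcategory on $[0],[1]$. $\mathcal A$ is shell-complete if for every $p\ge2$ the canonical map $\mathcal A[p]\to\mathrm{cosk}_1^{\mathcal A}(\mathcal A[p]_{\le1})$ (adjoint to the identity) is an isomorphism. *)

From mathcomp Require Import all_boot.
Set Implicit Arguments. Unset Strict Implicit. Unset Printing Implicit Defensive.

(* [n] = {0,1}^n ; [0] is the one-point set {()} (the unique ffun on 'I_0). *)
Definition cube (n : nat) := {ffun 'I_n -> bool}.

Definition cle n (x y : cube n) : bool := [forall i, x i ==> y i].
Definition clt n (x y : cube n) : bool := cle x y && (x != y).

(* set maps [m] -> [n] (finite functions, so equality is extensional) *)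
Definition cmap (m n : nat) := {ffun cube m -> cube n}.
Definition cid n : cmap n n := [ffun x => x].
Definition comp m n k (g : cmap n k) (f : cmap m n) : cmap m k :=
  [ffun x => g (f x)].

Definition strict_incr m n (f : cmap m n) : Prop :=
  forall x y : cube m, clt x y -> clt (f x) (f y).

Definition hamming n (x y : cube n) : nat := #|[set i | x i != y i]|.

Definition adj_preserving m n (f : cmap m n) : Prop :=
  strict_incr f /\
  forall x y : cube m, hamming x y = 1 -> hamming (f x) (f y) = 1.

(* face map delta_i^a : [n] -> [n+1] inserting a at position i *)
Definition face n (i : 'I_n.+1) (a : bool) : cmap n n.+1 :=
  [ffun x : cube n => [ffun j : 'I_n.+1 =>
     match unlift i j with Some j' => x j' | None => a end]].

(* the morphisms of the subcategory [square] generated by the face maps *)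
Inductive in_square : forall m n, cmap m n -> Prop :=
| sq_id n : in_square (cid n)
| sq_face m n (i : 'I_n.+1) (a : bool) (f : cmap m n) :
    in_square f -> in_square (comp (face i a) f).

(* a category of cubes: a subcategory of PoSet on the objects [n], n >= 0,
   containing [square], all of whose morphisms are adjacency-preserving *)
Record cat_cubes := CatCubes {
  amem : forall m n, cmap m n -> Prop;
  amem_id : forall n, amem (cid n);
  amem_comp : forall m n k (g : cmap n k) (f : cmap m n),
      amem g -> amem f -> amem (comp g f);
  amem_square : forall m n (f : cmap m n), in_square f -> amem f;
  amem_adj : forall m n (f : cmap m n), amem f -> adj_preserving f }.

Definition Amor (A : cat_cubes) m n := {f : cmap m n | amem A f}.

Definition Acomp (A : cat_cubes) j k n (f : Amor A k n) (g : Amor A j k)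
  : Amor A j n :=
  exist _ (comp (sval f) (sval g)) (amem_comp (svalP f) (svalP g)).

(* Natural families between the representables A[n] and A[p], restricted to
   the dimensions k satisfying S.  With S = predT these are the maps of
   A-sets A[n] -> A[p]; with S = (< p) (and n = p) these are the maps of
   A-sets dA[p] -> A[q] (the k-cubes of dA[p] are A([k],[p]) for k < p and
   none otherwise); with S = (<= 1) these are the maps of truncated
   presheaves A[n]_{<=1} -> A[p]_{<=1}. *)
Definition nat_fam (A : cat_cubes) (S : pred nat) n p :=
  { x : forall k, S k -> Amor A k n -> Amor A k p |
    forall j k (Sj : S j) (Sk : S k) (g : Amor A j k) (f : Amor A k n),
      sval (x j Sj (Acomp f g)) = comp (sval (x k Sk f)) (sval g) }.

Definition fam_app A S n p (x : nat_fam A S n p) k (Sk : S k) (f : Amor A k n)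
  : cmap k p := sval (sval x k Sk f).

(* Shell-completeness: for p >= 2 the unit A[p] -> cosk_1(A[p]_{<=1}) is an
   iso, i.e. in each dimension n the map sending f : [n] -> [p] to the
   truncated natural map (g |-> f o g) (g in A([k],[n]), k <= 1) is a
   bijection onto the natural maps A[n]_{<=1} -> A[p]_{<=1}
   ( = cosk_1(A[p]_{<=1})_n ). *)
Definition shell_complete (A : cat_cubes) : Prop :=
  forall p, 2 <= p -> forall n,
    (forall f g : Amor A n p,
       (forall k (Sk : k <= 1) (h : Amor A k n),
          comp (sval f) (sval h) = comp (sval g) (sval h)) ->
       sval f = sval g) /\
    (forall T : nat_fam A (fun k => k <= 1) n p,
       exists f : Amor A n p,
         forall k (Sk : k <= 1) (h : Amor A k n),
           fam_app T Sk h = comp (sval f) (sval h)).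

Definition pt : cube 0 := [ffun i => false].
Definition vertex_map n (v : cube n) : cmap 0 n := [ffun _ => v].

Lemma cube0_eq (x y : cube 0) : x = y.
Proof. by apply/ffunP => -[]. Qed.

Lemma vertex_square n (v : cube n) : in_square (vertex_map v).
Proof.
elim: n v => [|n IH] v.
  have -> : vertex_map v = cid 0.
    by apply/ffunP => x; rewrite !ffunE (cube0_eq v x).
  exact: sq_id.
pose v' : cube n := [ffun j => v (lift ord_max j)].
have -> : vertex_map v = comp (face ord_max (v ord_max)) (vertex_map v').
  apply/ffunP => x; rewrite !ffunE; apply/ffunP => j; rewrite !ffunE.
  by case: unliftP => [j'|] ->; rewrite ?ffunE.
exact/sq_face/IH.
Qed.

Definition vertex (A : cat_cubes) n (v : cube n) : Amor A 0 n :=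
  exist _ (vertex_map v) (amem_square A (vertex_square v)).

(* x_0 : [p] -> [q] for a map x : dA[p] -> A[q] (p > 0), via A([0],[n]) ~ [n] *)
Definition x0 (A : cat_cubes) p q (Hp : 0 < p)
  (x : nat_fam A (fun k => k < p) p q) : cmap p q :=
  [ffun v => fam_app x Hp (vertex A v) pt].

Definition restricts_to (A : cat_cubes) p q
  (y : nat_fam A predT p q) (x : nat_fam A (fun k => k < p) p q) : Prop :=
  forall k (Sk : k < p) (f : Amor A k p),
    fam_app y (isT : predT k) f = fam_app x Sk f.

Definition fam_eq A S n p (x y : nat_fam A S n p) : Prop :=
  forall k (Sk : S k) f, fam_app x Sk f = fam_app y Sk f.

Lemma ltn0_of_2 p : 2 <= p -> 0 < p.
Proof. by case: p. Qed.

Definition cond2 (A : cat_cubes) : Prop :=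
  forall p q (Hp : 2 <= p), 2 <= q ->
  forall x : nat_fam A (fun k => k < p) p q, amem A (x0 (ltn0_of_2 Hp) x).

Definition cond3 (A : cat_cubes) : Prop :=
  forall p q, 2 <= p -> 2 <= q ->
  forall x : nat_fam A (fun k => k < p) p q,
    exists y : nat_fam A predT p q,
      restricts_to y x /\
      forall y' : nat_fam A predT p q, restricts_to y' x -> fam_eq y y'.

(* A natural map between representables (in any range of dimensions containing 0)
   is determined by what it does on vertices, i.e. it is precomposition with the
   set map [x_0].  Conditions (1) and (2) therefore both say that a set map [F : [n] -> [p]],
   p >= 2, lies in A as soon as all its composites with cubes of dimension <= 1 do.
   For shell-completeness this is a rephrasing; (2) gives it by induction on n,
   extending from the boundary of [n] to [n]; and (3) is equivalent to (2) because
   the extension of [x : dA[p] -> A[q]] can only be precomposition with [x_0],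
   whose value on the identity of [p] is [x_0] itself. *)
From Stdlib Require Import ProofIrrelevance.
From mathcomp Require Import all_boot.
Set Implicit Arguments. Unset Strict Implicit. Unset Printing Implicit Defensive.

Lemma comp_cidr m n (F : cmap m n) : comp F (cid m) = F.
Proof. by apply/ffunP => v; rewrite !ffunE. Qed.

Lemma compA_cmap m n k l (F : cmap k l) (G : cmap n k) (H : cmap m n) :
  comp F (comp G H) = comp (comp F G) H.
Proof. by apply/ffunP => v; rewrite !ffunE. Qed.

Lemma comp_vertex_map m n (F : cmap m n) (v : cube m) :
  comp F (vertex_map v) = vertex_map (F v).
Proof. by apply/ffunP => w; rewrite !ffunE. Qed.

Lemma cmap_eq_vertices m n (F G : cmap m n) :
  (forall v, comp F (vertex_map v) = comp G (vertex_map v)) -> F = G.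
Proof.
move=> FG; apply/ffunP => v.
by have /ffunP/(_ pt) := FG v; rewrite !comp_vertex_map !ffunE.
Qed.

Lemma Amor_inj (A : cat_cubes) m n : injective (fun f : Amor A m n => sval f).
Proof.
by move=> [f Af] [g Ag] /= fg; subst g; rewrite (proof_irrelevance _ Af Ag).
Qed.

Definition Aid (A : cat_cubes) n : Amor A n n := exist _ (cid n) (amem_id A n).

Lemma Acomp_vertex (A : cat_cubes) k n (f : Amor A k n) (v : cube k) :
  Acomp f (vertex A v) = vertex A (sval f v).
Proof. by apply: Amor_inj; rewrite /= comp_vertex_map. Qed.

Section NaturalFamilies.
Variables (A : cat_cubes) (S : pred nat) (n p : nat).

Definition fam0 (x : nat_fam A S n p) (S0 : S 0) : cmap n p :=
  [ffun v => fam_app x S0 (vertex A v) pt].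

Lemma fam_appE (x : nat_fam A S n p) (S0 : S 0) k (Sk : S k) (f : Amor A k n) :
  fam_app x Sk f = comp (fam0 x S0) (sval f).
Proof.
apply/ffunP => v; rewrite !ffunE.
have := svalP x 0 k S0 Sk (vertex A v) f.
by rewrite Acomp_vertex /fam_app => ->; rewrite !ffunE.
Qed.

Lemma amem_fam0 (x : nat_fam A S n p) (S0 : S 0) : S n -> amem A (fam0 x S0).
Proof.
move=> Sn; have := svalP (sval x n Sn (Aid A n)).
by rewrite -[sval _]/(fam_app x Sn (Aid A n)) (fam_appE _ S0) comp_cidr.
Qed.

Definition precomp_fam (F : cmap n p)
  (AF : forall k, S k -> forall f : Amor A k n, amem A (comp F (sval f))) :
  nat_fam A S n p :=
  exist (fun x : forall k, S k -> Amor A k n -> Amor A k p =>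
           forall j k (Sj : S j) (Sk : S k) (g : Amor A j k) (f : Amor A k n),
             sval (x j Sj (Acomp f g)) = comp (sval (x k Sk f)) (sval g))
    (fun k Sk f => exist _ (comp F (sval f)) (AF k Sk f))
    (fun j k Sj Sk g f => compA_cmap F (sval f) (sval g)).

End NaturalFamilies.

Definition edge_closed (A : cat_cubes) : Prop :=
  forall p, 2 <= p -> forall n (F : cmap n p),
    (forall k, k <= 1 -> forall h : Amor A k n, amem A (comp F (sval h))) ->
    amem A F.

Lemma shell_complete_edge_closed (A : cat_cubes) :
  shell_complete A <-> edge_closed A.
Proof.
split=> [shA p p2 n F AF | clA p p2 n].
  have [_ /(_ (precomp_fam AF)) [f fF]] := shA p p2 n.
  suff -> : F = sval f by exact: svalP.
  by apply: cmap_eq_vertices => v; exact: (fF 0 isT (vertex A v)).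
split=> [f g fg | T].
  by apply: cmap_eq_vertices => v; exact: (fg 0 isT (vertex A v)).
have AT : amem A (fam0 T (isT : 0 <= 1)).
  apply: (clA p p2 n) => k k1 h.
  by rewrite -(fam_appE _ isT k1); exact: svalP.
by exists (exist _ _ AT) => k k1 h; exact: fam_appE.
Qed.

Lemma cond2_edge_closed (A : cat_cubes) : cond2 A <-> edge_closed A.
Proof.
split=> [c2 p p2 | clA p q p2 q2 x].
  elim/ltn_ind=> -[|[|n]] IH F AF.
  - suff -> : F = vertex_map (F pt) by exact: amem_square (vertex_square _).
    by apply/ffunP => w; rewrite ffunE (cube0_eq w pt).
  - by have := AF 1 isT (Aid A 1); rewrite comp_cidr.
  - have AFb k (kn : k < n.+2) (g : Amor A k n.+2) : amem A (comp F (sval g)).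
      apply: IH kn _ _ => j j1 h.
      by rewrite -compA_cmap; exact: (AF j j1 (Acomp g h)).
    suff -> : F = x0 (ltn0_of_2 (isT : 2 <= n.+2)) (precomp_fam AFb) by exact: c2.
    by apply/ffunP => v; rewrite !ffunE.
apply: (clA q q2 p) => k k1 h.
rewrite -[x0 _ x]/(fam0 x (ltn0_of_2 p2)).
have kp : k < p := leq_ltn_trans k1 p2.
by rewrite -(fam_appE x _ kp); exact: svalP.
Qed.

Lemma fam0_restricts_to (A : cat_cubes) p q (p0 : 0 < p)
  (y : nat_fam A predT p q) (x : nat_fam A (fun k => k < p) p q) :
  restricts_to y x -> fam0 y (isT : predT 0) = x0 p0 x.
Proof. by move=> yx; apply/ffunP => v; rewrite !ffunE yx. Qed.

Lemma cond2_cond3 (A : cat_cubes) : cond2 A <-> cond3 A.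
Proof.
split=> [c2 p q p2 q2 x | c3 p q p2 q2 x].
  have Ax0 k (_ : predT k) (f : Amor A k p) :
      amem A (comp (x0 (ltn0_of_2 p2) x) (sval f)).
    exact: amem_comp (c2 p q p2 q2 x) (svalP f).
  exists (precomp_fam Ax0); split.
    by move=> k kp f; rewrite (fam_appE x (ltn0_of_2 p2) kp).
  move=> y' y'x k Tk f.
  by rewrite (fam_appE y' (isT : predT 0)) (fam0_restricts_to (ltn0_of_2 p2) y'x).
have [y [yx _]] := c3 p q p2 q2 x.
rewrite -(fam0_restricts_to _ yx); exact: amem_fam0.
Qed.

Theorem theorem7p4 (A : cat_cubes) :
  (shell_complete A <-> cond2 A) /\ (cond2 A <-> cond3 A).
Proof.
split; last exact: cond2_cond3.
exact: iff_trans (shell_complete_edge_closed A) (iff_sym (cond2_edge_closed A)).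
Qed.
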